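(* Let $G=(V,E)$ be a directed graph with $n=|V|$ and $A$ a node-weighting, and let $1\le\alpha\le\log n$. Suppose some $A$-respecting $h$-length symmetric demand $D$ has $h\cdot s$-length sparsity at most $\phi$ with respect to some $h\cdot s$-length moving cut $C$. Then the $\alpha$-exponential demand $D^{\alpha}_{h,A}$ has $\frac{h\cdot s}{2}$-length sparsity at most $2^{8\alpha+1}\phi$ with respect to the same cut $C$, i.e. $|C|/\mathrm{sep}_{hs/2}(C,D^\alpha_{h,A})\le 2^{8\alpha+1}\phi$.
   Context: $G$ has positive integer edge lengths $\ell(e)$ and capacities $u(e)$; $\mathrm{dist}(u,v)$ is the directed distance in $G$ and $\overline{\mathrm{dist}}(u,v)=\mathrm{dist}(u,v)+\mathrm{dist}(v,u)$. Node-weighting $A\ge0$; demand $D:V\times V\to\mathbb{R}_{\ge0}$, $|D|=\sum D(u,v)$; $A$-respecting: $\max\{\sum_wD(v,w),\sum_wD(w,v)\}\le A(v)$; $h$-length: $D(u,v)>0\Rightarrow\mathrm{dist}(u,v)\le h$; symmetric: $D(u,v)=D(v,u)$. An $H$-length moving cut is $C:E\to\{0,\tfrac1H,\dots\}\cap[0,1]$, $|C|=\sum_eu(e)C(e)$; $G-C$ has lengths $\ell(e)+H\cdot C(e)$; $\mathrm{sep}_{h'}(C,D)=\sum_{(u,v):\mathrm{dist}_{G-C}(u,v)>h'}D(u,v)$; $h'$-length sparsity $\mathrm{spars}_{h'}(C,D)=|C|/\mathrm{sep}_{h'}(C,D)$. Exponential weights (for $1\le\alpha\le\log n$): $w_h^\alpha(u,v)=1$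 if $u=v$; $=2^{-\alpha\overline{\mathrm{dist}}(u,v)/h}$ if $u\neq v$ and $\overline{\mathrm{dist}}(u,v)\le\frac{2h\log_2 n}{\alpha}$; $=0$ otherwise. $w_h^\alpha(u)=\sum_{b\in V}w_h^\alpha(u,b)$, $M_h^\alpha(u,v)=w_h^\alpha(u,v)/w_h^\alpha(u)$, and $D^\alpha_{h,A}(u,v)=A(u)M_h^\alpha(u,v)+A(v)M_h^\alpha(v,u)$. *)

From HB Require Import structures.
From mathcomp Require Import all_boot all_order all_algebra.
From mathcomp Require Import all_classical all_reals.
From mathcomp Require Import ereal exp.
Set Implicit Arguments. Unset Strict Implicit. Unset Printing Implicit Defensive.
Import Order.TTheory GRing.Theory Num.Theory.
Local Open Scope ring_scope.

Section Defs.
Variable R : realType.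
Variables (V E : finType) (src tgt : E -> V).

Fixpoint walk (x y : V) (p : seq E) : bool :=
  match p with
  | [::] => x == y
  | e :: p' => (src e == x) && walk (tgt e) y p'
  end.

(* directed distance w.r.t. the length function len; +oo if unreachable *)
Definition dist (len : E -> R) (x y : V) : \bar R :=
  ereal_inf [set ((\sum_(e <- p) len e)%:E) | p in [set p | walk x y p]].

Definition distbar (len : E -> R) (x y : V) : \bar R :=
  (dist len x y + dist len y x)%E.

Definition is_moving_cut (H : R) (C : E -> R) : Prop :=
  forall e, 0 <= C e <= 1 /\ exists k : nat, C e = k%:R / H.

Definition cut_size (cap : E -> nat) (C : E -> R) : R :=
  \sum_(e : E) (cap e)%:R * C e.

(* lengths of G - C : l(e) + H * C(e) *)
Definition cut_len (len : E -> nat) (H : R) (C : E -> R) (e : E) : R :=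
  (len e)%:R + H * C e.

Definition sep (len : E -> nat) (H : R) (C : E -> R) (h' : R)
  (D : V -> V -> R) : R :=
  \sum_(u : V) \sum_(v : V)
     (if (h'%:E < dist (cut_len len H C) u v)%E then D u v else 0).

Definition nonneg_demand (D : V -> V -> R) : Prop := forall u v, 0 <= D u v.
Definition A_respecting (A : V -> R) (D : V -> V -> R) : Prop :=
  forall v, Num.max (\sum_(w : V) D v w) (\sum_(w : V) D w v) <= A v.
Definition h_length (len : E -> nat) (h : R) (D : V -> V -> R) : Prop :=
  forall u v, 0 < D u v -> (dist (fun e => (len e)%:R) u v <= h%:E)%E.
Definition symmetric_demand (D : V -> V -> R) : Prop :=
  forall u v, D u v = D v u.

Definition log2 (x : R) : R := ln x / ln 2.

Definition expw (len : E -> nat) (h alpha : R) (u b : V) : R :=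
  let db := distbar (fun e => (len e)%:R) u b in
  if u == b then 1
  else if (db <= (2 * h * log2 #|V|%:R / alpha)%:E)%E
       then powR 2 (- (alpha * fine db / h))
       else 0.

Definition expw_tot (len : E -> nat) (h alpha : R) (u : V) : R :=
  \sum_(b : V) expw len h alpha u b.

Definition expM (len : E -> nat) (h alpha : R) (u v : V) : R :=
  expw len h alpha u v / expw_tot len h alpha u.

Definition exp_demand (len : E -> nat) (h alpha : R) (A : V -> R) (u v : V) : R :=
  A u * expM len h alpha u v + A v * expM len h alpha v u.

End Defs.

(* From u, the exponential demand spreads A(u) along the row M(u, .) of a
   row-stochastic matrix whose entries decay like 2^(-alpha dbar(u, b) / h).  If D(u, v) > 0
   then dbar(u, v) <= 2h, and if moreover u and v are (h s)-separated by C, the triangle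
   inequality in G - C makes every b (h s / 2)-separated from u or from v.  Moving the
   source from u to v changes each weight by a factor K = 2^(2 alpha) at most (up to an
   additive K / n^2 beyond the cut-off radius), so M(u, .) restricted to the first kind of b
   plus M(v, .) restricted to the second kind always has mass at least 1 / (4 K^2).  Hence
   each separated pair carries at least D(u, v) / (4 K^2) of separated exponential demand,
   and as D is A-respecting, sep_{hs/2}(C, D^alpha) >= sep_{hs}(C, D) / (4 K^2), where
   4 K^2 = 2^(4 alpha + 2) <= 2^(8 alpha + 1). *)

From mathcomp Require Import all_boot all_order all_algebra.
From mathcomp Require Import all_classical all_reals.
From mathcomp Require Import ereal exp.
From mathcomp Require Import ring lra.
Import Order.TTheory GRing.Theory Num.Theory.
Set Implicit Arguments. Unset Strict Implicit. Unset Printing Implicit Defensive.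
Local Open Scope ring_scope.

Section Distances.
Variables (R : realType) (V E : finType) (src tgt : E -> V) (len : E -> R).
Hypothesis len_ge0 : forall e, 0 <= len e.

Lemma walk_cat x y z p q :
  walk src tgt x y p -> walk src tgt y z q -> walk src tgt x z (p ++ q).
Proof.
elim: p x => [|e p IH] x /=; first by move/eqP->.
by case/andP=> -> /IH wq /wq.
Qed.

Lemma dist_le_walk x y p :
  walk src tgt x y p -> (dist src tgt len x y <= (\sum_(e <- p) len e)%:E)%E.
Proof. by move=> w; apply: ereal_inf_lbound; exists p. Qed.

Lemma dist_ge0 x y : (0 <= dist src tgt len x y)%E.
Proof. by apply/ereal_infP => _ [p _ <-]; rewrite lee_fin sumr_ge0. Qed.

Lemma dist_neqNy x y : dist src tgt len x y != -oo%E.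
Proof. by apply: contraTneq (dist_ge0 x y) => ->. Qed.

Lemma dist_refl x : dist src tgt len x x = 0%E.
Proof.
apply/le_anti; rewrite dist_ge0 andbT.
by have := @dist_le_walk x x [::] (eqxx x); rewrite big_nil.
Qed.

Lemma dist_triangle x y z :
  (dist src tgt len x z <= dist src tgt len x y + dist src tgt len y z)%E.
Proof.
have := dist_neqNy x y; case Exy: (dist src tgt len x y) => [a| |] // _;
  last by rewrite addye ?dist_neqNy ?leey.
have := dist_neqNy y z; case Eyz: (dist src tgt len y z) => [b| |] // _;
  last by rewrite addey ?leey.
apply/lee_addgt0Pr => eps eps_gt0.
have /ereal_inf_lt [_ [p wp <-] lt_p] : (dist src tgt len x y < (a + eps / 2)%:E)%E.
  by rewrite Exy lte_fin; lra.
have /ereal_inf_lt [_ [q wq <-] lt_q] : (dist src tgt len y z < (b + eps / 2)%:E)%E.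
  by rewrite Eyz lte_fin; lra.
apply: le_trans (dist_le_walk (walk_cat wp wq)) _.
by move: lt_p lt_q; rewrite big_cat /= !lte_fin lee_fin; lra.
Qed.

Lemma dist_split_half r x y : (r%:E < dist src tgt len x y)%E ->
  forall b, ((r / 2)%:E < dist src tgt len x b)%E ||
            ((r / 2)%:E < dist src tgt len b y)%E.
Proof.
move=> lt_xy b; rewrite !ltNge -negb_and; apply/negP => /andP[le_xb le_by].
have := le_trans (dist_triangle x b y) (leeD le_xb le_by).
by rewrite -EFinD -splitr leNgt lt_xy.
Qed.

Lemma distbar_ge0 x y : (0 <= distbar src tgt len x y)%E.
Proof. by rewrite adde_ge0 ?dist_ge0. Qed.

Lemma distbar_refl x : distbar src tgt len x x = 0%E.
Proof. by rewrite /distbar dist_refl adde0. Qed.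

Lemma distbar_triangle x y z :
  (distbar src tgt len x z <= distbar src tgt len x y + distbar src tgt len y z)%E.
Proof.
apply: le_trans (leeD (dist_triangle x y z) (dist_triangle z y x)) _.
by rewrite /distbar [(dist _ _ _ z y + _)%E]addeC addeACA.
Qed.

End Distances.

Section Decay.
Variable R : realType.

Definition decay (a h r : R) : R := powR 2 (- (a * r / h)).

Lemma two_neq0 : (2 : R) != 0. Proof. by rewrite pnatr_eq0. Qed.

Lemma powR2D (x y : R) : powR 2 (x + y) = powR 2 x * powR 2 y.
Proof. by rewrite powRD //; apply/implyP => _; exact: two_neq0. Qed.

Lemma powR2_log2 (x : R) : 0 < x -> powR 2 (log2 x) = x.
Proof.
move=> x_gt0; rewrite /powR (negbTE two_neq0) /log2 divfK ?lnK //.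
by rewrite gt_eqF // ln_gt0 // ltr1n.
Qed.

Lemma decayD (a h r1 r2 : R) : decay a h (r1 + r2) = decay a h r1 * decay a h r2.
Proof. by rewrite /decay -powR2D mulrDr mulrDl opprD. Qed.

Lemma decay0 (a h : R) : decay a h 0 = 1.
Proof. by rewrite /decay mulr0 mul0r oppr0 powRr0. Qed.

Lemma decay_ge0 (a h r : R) : 0 <= decay a h r.
Proof. exact: powR_ge0. Qed.

Lemma decay_le (a h r1 r2 : R) :
  0 <= a -> 0 < h -> r1 <= r2 -> decay a h r2 <= decay a h r1.
Proof.
move=> a_ge0 h_gt0 le_r; apply: ler_powR; first by rewrite ler1n.
by rewrite lerN2 ler_pM2r ?invr_gt0 // ler_wpM2l.
Qed.

Lemma decay_le1 (a h r : R) : 0 <= a -> 0 < h -> 0 <= r -> decay a h r <= 1.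
Proof. by move=> *; rewrite -(decay0 a h); apply: decay_le. Qed.

Lemma four_mul_sq_powR2_le (a : R) :
  4^-1 <= a -> 4 * powR 2 (2 * a) ^+ 2 <= powR 2 (8 * a + 1).
Proof.
move=> a_ge; have -> : (4 : R) = powR 2 2 by rewrite powR_mulrn ?ler0n // expr2 -natrM.
rewrite expr2 -!powR2D; apply: ler_powR; [by rewrite ler1n | lra].
Qed.

End Decay.

Section QuasiMetricWeights.
Variables (R : realType) (V : finType) (db : V -> V -> \bar R) (h a : R).
Hypothesis db_ge0 : forall x y, (0 <= db x y)%E.
Hypothesis db_refl : forall x, db x x = 0%E.
Hypothesis db_triangle : forall x y z, (db x z <= db x y + db y z)%E.
Hypotheses (h_gt0 : 0 < h) (a_ge1 : (1 : R) <= a) (a_le_log2 : a <= log2 #|V|%:R).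

Local Notation n := (#|V|%:R : R).
Local Notation L := (2 * h * log2 n / a).
Local Notation K := (powR 2 (2 * a)).
Local Notation near u b := (db u b <= (L - 2 * h)%:E)%E.

Definition weight x b : R :=
  if (db x b <= L%:E)%E then decay a h (fine (db x b)) else 0.

Definition weight_tot x : R := \sum_b weight x b.

Definition mass x b : R := weight x b / weight_tot x.

Lemma card_gt0 : 0 < n.
Proof.
rewrite lt_def ler0n andbT; apply/negP => /eqP n0.
have : log2 n <= 0 by rewrite /log2 n0 pmulr_lle0 ?invr_gt0 ?ln_gt0 ?ltr1n ?ln_le0.
by move/(le_trans (le_trans a_ge1 a_le_log2)); rewrite ler10.
Qed.

Lemma a_gt0 : 0 < a. Proof. exact: lt_le_trans ltr01 a_ge1. Qed.

Lemma a_ge0 : 0 <= a. Proof. exact: ltW a_gt0. Qed.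

Lemma div_card_sq_mulrn (x : R) : (x / n ^+ 2) *+ #|V| = x / n.
Proof. by rewrite -mulr_natr expr2; field; rewrite gt_eqF ?card_gt0. Qed.

Lemma two_h_le_L : 2 * h <= L.
Proof.
have : 1 <= log2 n / a by rewrite ler_pdivlMr ?mul1r ?a_gt0.
by rewrite -mulrA => le1; rewrite -{1}(mulr1 (2 * h)) ler_wpM2l // mulr_ge0 ?ltW.
Qed.

Lemma K_ge2 : 2 <= K.
Proof.
rewrite -{1}(@powRr1 _ 2) ?ler0n //; apply: ler_powR; [by rewrite ler1n | move: a_ge1; lra].
Qed.

Lemma decay_2h : decay a h (2 * h) = K^-1.
Proof. by rewrite /decay -powRN; congr powR; field; rewrite gt_eqF. Qed.

Lemma decay_L_2h : decay a h (L - 2 * h) = K / n ^+ 2.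
Proof.
rewrite /decay; have -> : - (a * (L - 2 * h) / h) = 2 * a + - (log2 n + log2 n).
  by field; rewrite !gt_eqF ?a_gt0.
by rewrite powR2D (powRN 2 (log2 n + log2 n)) powR2D powR2_log2 ?card_gt0.
Qed.

Lemma L_ge0 : 0 <= L.
Proof. by apply: le_trans two_h_le_L; rewrite mulr_ge0 ?ltW. Qed.

Lemma K_gt0 : 0 < K.
Proof. exact: lt_le_trans K_ge2. Qed.

Lemma db_fineE x b r : (db x b <= r%:E)%E -> db x b = (fine (db x b))%:E.
Proof. by have := db_ge0 x b; case: (db x b). Qed.

Lemma weight_ge0 x b : 0 <= weight x b.
Proof. by rewrite /weight; case: ifP => // _; exact: decay_ge0. Qed.

Lemma weight_le1 x b : weight x b <= 1.
Proof.
rewrite /weight; case: ifP => _; last exact: ler01.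
by apply: decay_le1 a_ge0 h_gt0 _; exact: fine_ge0.
Qed.

Lemma weight_refl x : weight x x = 1.
Proof. by rewrite /weight db_refl lee_fin L_ge0 /= decay0. Qed.

Lemma weight_tot_ge1 x : 1 <= weight_tot x.
Proof.
rewrite /weight_tot (bigD1 x) //= weight_refl lerDl.
by apply: sumr_ge0 => b _; exact: weight_ge0.
Qed.

Lemma weight_tot_gt0 x : 0 < weight_tot x.
Proof. exact: lt_le_trans ltr01 (weight_tot_ge1 x). Qed.

Lemma weight_tot_le_card x : weight_tot x <= n.
Proof.
apply: le_trans (ler_sum _ (fun b _ => weight_le1 x b)) _.
by rewrite sumr_const.
Qed.

Lemma weight_near u v b : (db v u <= (2 * h)%:E)%E ->
  near u b -> K^-1 * weight u b <= weight v b.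
Proof.
move=> vu ub; have ubE := db_fineE ub; set t := fine (db u b) in ubE.
have t_le : t <= L - 2 * h by move: ub; rewrite ubE lee_fin.
have vb : (db v b <= (2 * h + t)%:E)%E.
  by apply: le_trans (db_triangle v u b) _; rewrite ubE EFinD leeD2r.
have h_ge0 := ltW h_gt0.
have vb_L : (db v b <= L%:E)%E by apply: le_trans vb _; rewrite lee_fin; lra.
have ub_L : (db u b <= L%:E)%E by apply: le_trans ub _; rewrite lee_fin; lra.
rewrite /weight vb_L ub_L -/t -decay_2h -decayD.
by apply: (decay_le a_ge0 h_gt0); move: vb; rewrite (db_fineE vb_L) lee_fin.
Qed.

Lemma weight_far u b :
  ~~ near u b -> weight u b <= K / n ^+ 2.
Proof.
move=> ub; rewrite /weight; case: ifP => ub_L; last first.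
  by rewrite divr_ge0 ?exprn_ge0 ?ltW ?K_gt0 ?card_gt0.
move: ub; rewrite (db_fineE ub_L) lee_fin -ltNge => ub.
by rewrite -decay_L_2h; exact: decay_le a_ge0 h_gt0 (ltW ub).
Qed.

Lemma weight_shift u v b : (db u v <= (2 * h)%:E)%E ->
  weight v b <= K * weight u b + K / n ^+ 2.
Proof.
move=> uv; have Kn_ge0 : 0 <= K / n ^+ 2.
  by rewrite divr_ge0 ?exprn_ge0 ?ltW ?K_gt0 ?card_gt0.
rewrite {1}/weight; case: ifP => vb_L; last first.
  by rewrite addr_ge0 // mulr_ge0 ?weight_ge0 ?(ltW K_gt0).
have vbE := db_fineE vb_L; set t := fine (db v b) in vbE *.
have ub : (db u b <= (2 * h + t)%:E)%E.
  by apply: le_trans (db_triangle u v b) _; rewrite vbE EFinD leeD2r.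
rewrite /weight; case: ifP => ub_L.
  apply: le_trans (_ : K * decay a h (fine (db u b)) <= _); last by rewrite lerDl.
  rewrite -ler_pdivrMl ?K_gt0 // -decay_2h -decayD.
  by apply: (decay_le a_ge0 h_gt0); move: ub; rewrite (db_fineE ub_L) lee_fin.
have : (L%:E < (2 * h + t)%:E)%E by apply: lt_le_trans ub; rewrite ltNge ub_L.
rewrite lte_fin mulr0 add0r -decay_L_2h => lt_L.
by apply: (decay_le a_ge0 h_gt0); lra.
Qed.

Lemma weight_tot_shift u v : (db u v <= (2 * h)%:E)%E ->
  weight_tot v <= 2 * K * weight_tot u.
Proof.
move=> uv; apply: le_trans (ler_sum _ (fun b _ => weight_shift b uv)) _.
rewrite big_split /= -mulr_sumr sumr_const -/(weight_tot u).
rewrite div_card_sq_mulrn.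
have n_ge1 : 1 <= n := le_trans (weight_tot_ge1 u) (weight_tot_le_card u).
have K_le : K / n <= K * weight_tot u.
  apply: le_trans (_ : K <= _).
    by rewrite ler_pdivrMr ?card_gt0 // ler_peMr ?(ltW K_gt0).
  by rewrite ler_peMr ?(ltW K_gt0) ?weight_tot_ge1.
lra.
Qed.

Lemma mass_ge0 x b : 0 <= mass x b.
Proof. by rewrite divr_ge0 ?weight_ge0 ?(ltW (weight_tot_gt0 x)). Qed.

Lemma mass_le_weight x b : mass x b <= weight x b.
Proof.
by rewrite ler_pdivrMr ?weight_tot_gt0 // ler_peMr ?weight_ge0 ?weight_tot_ge1.
Qed.

Lemma sum_mass x : \sum_b mass x b = 1.
Proof. by rewrite -mulr_suml mulfV ?gt_eqF ?weight_tot_gt0. Qed.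

Lemma mass_far u : 2 * K <= n ->
  \sum_(b | ~~ near u b) mass u b <= 2^-1.
Proof.
move=> K_le; rewrite big_mkcond /=.
apply: le_trans (_ : \sum_(b : V) K / n ^+ 2 <= _).
  apply: ler_sum => b _; case: ifP => [far|_].
    exact: le_trans (mass_le_weight u b) (weight_far far).
  by rewrite divr_ge0 ?exprn_ge0 ?ltW ?K_gt0 ?card_gt0.
rewrite sumr_const div_card_sq_mulrn ler_pdivrMr ?card_gt0 //; lra.
Qed.

Lemma mass_small u v : n < 2 * K -> (db u v <= (2 * h)%:E)%E ->
  (2 * K ^+ 2)^-1 <= mass u v.
Proof.
move=> n_lt uv; have K_gt0 := K_gt0; have n_gt0 := card_gt0.
have w_ge : K^-1 <= weight u v.
  rewrite /weight (le_trans uv) ?lee_fin ?two_h_le_L // -decay_2h.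
  by apply: (decay_le a_ge0 h_gt0); move: (uv); rewrite (db_fineE uv) lee_fin.
apply: le_trans (_ : K^-1 / n <= _).
  by rewrite -invfM lef_pV2 ?posrE ?mulr_gt0 ?exprn_gt0 // expr2; nra.
apply: ler_pM w_ge _; rewrite ?invr_ge0 ?(ltW K_gt0) ?(ltW n_gt0) //.
by rewrite lef_pV2 ?posrE ?weight_tot_gt0 ?weight_tot_le_card.
Qed.

Lemma mass_near u v b : (db u v <= (2 * h)%:E)%E -> (db v u <= (2 * h)%:E)%E ->
  near u b -> (2 * K ^+ 2)^-1 * mass u b <= mass v b.
Proof.
move=> uv vu ub; have K_gt0 := K_gt0; have W_gt0 := weight_tot_gt0 u.
have -> : (2 * K ^+ 2)^-1 * mass u b = K^-1 * weight u b / (2 * K * weight_tot u).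
  by rewrite /mass; field; rewrite !gt_eqF.
apply: ler_pM (weight_near vu ub) _.
- by rewrite mulr_ge0 ?weight_ge0 ?invr_ge0 ?ltW.
- by rewrite invr_ge0 !mulr_ge0 ?ltW.
- by rewrite lef_pV2 ?posrE ?weight_tot_gt0 ?mulr_gt0 ?weight_tot_shift.
Qed.

Lemma mass_cover u v (P Q : pred V) :
  (db u v <= (2 * h)%:E)%E -> (db v u <= (2 * h)%:E)%E ->
  P v -> (forall b, P b || Q b) ->
  (4 * K ^+ 2)^-1 <= \sum_(b | P b) mass u b + \sum_(b | Q b) mass v b.
Proof.
move=> uv vu Pv PQ; have K2 := K_ge2.
set c := (2 * K ^+ 2)^-1.
have c_gt0 : 0 < c by rewrite invr_gt0 mulr_gt0 ?exprn_gt0 ?K_gt0.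
have c_le1 : c <= 1 by rewrite invf_le1 ?mulr_gt0 ?exprn_gt0 ?K_gt0 // expr2; nra.
have sum_ge0 x (S : pred V) : 0 <= \sum_(b | S b) mass x b.
  by apply: sumr_ge0 => b _; exact: mass_ge0.
(* For small n the single term mass u v suffices; otherwise at least half of
   mass u lies near u, where mass v dominates it up to the factor 2 K^2. *)
have [n_lt|K_le] := ltP n (2 * K).
  apply: le_trans (_ : c <= _).
    by rewrite lef_pV2 ?posrE ?mulr_gt0 ?exprn_gt0 ?K_gt0 // ler_wpM2r ?exprn_ge0 ?ler_nat.
  apply: le_trans (mass_small n_lt uv) _.
  by rewrite (bigD1 v) //= -addrA lerDl addr_ge0.
have near_mass : 2^-1 <= \sum_(b | near u b) mass u b.
  have := mass_far u K_le; have := sum_mass u.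
  by rewrite (bigID (fun b => near u b)) /=; lra.
apply: le_trans (_ : \sum_(b | near u b) c * mass u b <= _).
  rewrite -mulr_sumr (_ : (4 * K ^+ 2)^-1 = c * 2^-1); last first.
    by rewrite /c; field; rewrite gt_eqF ?K_gt0.
  by apply: ler_wpM2l; [exact: ltW | exact: near_mass].
rewrite [\sum_(b | P b) _]big_mkcond [\sum_(b | Q b) _]big_mkcond -big_split.
rewrite big_mkcond /=.
apply: ler_sum => b _; have := mass_ge0 u b; have := mass_ge0 v b.
case: ifP => [near_b|_] mv_ge0 mu_ge0; last by rewrite addr_ge0 //; case: ifP.
case/orP: (PQ b) => [Pb|Qb].
  rewrite Pb; apply: le_trans (_ : mass u b <= _); first by rewrite ler_piMl.
  by rewrite lerDl; case: ifP.
rewrite Qb; apply: le_trans (mass_near uv vu near_b) _.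
by rewrite lerDr; case: ifP.
Qed.

End QuasiMetricWeights.

Section CutSeparation.
Variables (R : realType) (V E : finType) (src tgt : E -> V) (len : E -> nat).
Variables (H : R) (C : E -> R).

Local Notation dC := (dist src tgt (cut_len len H C)).

Lemma sep_symmetrizeE (A : V -> R) (M : V -> V -> R) r :
  sep src tgt len H C r (fun u v => A u * M u v + A v * M v u) =
  \sum_u A u * \sum_(b | (r%:E < dC u b)%E) M u b +
  \sum_v A v * \sum_(b | (r%:E < dC b v)%E) M v b.
Proof.
rewrite /sep; transitivity (\sum_x \sum_y
    ((if (r%:E < dC x y)%E then A x * M x y else 0) +
     (if (r%:E < dC x y)%E then A y * M y x else 0))).
  by apply: eq_bigr => x _; apply: eq_bigr => y _; case: ifP; rewrite ?addr0.
under eq_bigr do rewrite big_split /=.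
rewrite big_split /= [in X in _ + X = _]exchange_big /=.
by congr (_ + _); apply: eq_bigr => x _; rewrite mulr_sumr [RHS]big_mkcond;
  apply: eq_bigr => y _; case: ifP; rewrite ?mulr0.
Qed.

Lemma sep_le_cover (A : V -> R) (D : V -> V -> R) (P Q : V -> R) (c r : R) :
  nonneg_demand D -> A_respecting A D -> 0 <= c ->
  (forall u, 0 <= P u) -> (forall v, 0 <= Q v) ->
  (forall u v, 0 < D u v -> (r%:E < dC u v)%E -> c <= P u + Q v) ->
  c * sep src tgt len H C r D <= \sum_u A u * P u + \sum_v A v * Q v.
Proof.
move=> D_ge0 D_resp c_ge0 P_ge0 Q_ge0 cover.
rewrite /sep mulr_sumr.
apply: le_trans (_ : \sum_u \sum_v (D u v * P u + D u v * Q v) <= _).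
  apply: ler_sum => u _; rewrite mulr_sumr; apply: ler_sum => v _.
  case: ifP => sep_uv; last by rewrite mulr0 addr_ge0 // mulr_ge0.
  have := D_ge0 u v; rewrite le_eqVlt => /orP[/eqP <-|Duv_gt0].
    by rewrite mulr0 !mul0r addr0.
  by rewrite -mulrDr mulrC ler_pM2l // cover.
under eq_bigr do rewrite big_split /=.
rewrite big_split /=; apply: lerD.
  apply: ler_sum => u _; rewrite -mulr_suml; apply: ler_wpM2r => //.
  by have := D_resp u; rewrite ge_max => /andP[].
rewrite exchange_big /=; apply: ler_sum => v _; rewrite -mulr_suml.
by apply: ler_wpM2r => //; have := D_resp v; rewrite ge_max => /andP[].
Qed.

End CutSeparation.

Section ExponentialDemand.
Variables (R : realType) (V E : finType) (src tgt : E -> V) (len : E -> nat).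
Variables (h a : R).
Hypotheses (h_gt0 : 0 < h) (a_ge1 : (1 : R) <= a) (a_le_log2 : a <= log2 #|V|%:R).

Local Notation db := (distbar src tgt (fun e => (len e)%:R : R)).

Let len_ge0 e : 0 <= (len e)%:R :> R := ler0n _ _.

Lemma expw_weightE x b : expw src tgt len h a x b = weight db h a x b.
Proof.
rewrite /expw /=; case: eqP => [<-|_] //.
by rewrite (weight_refl (distbar_refl _ _ len_ge0)).
Qed.

Lemma expM_massE x b : expM src tgt len h a x b = mass db h a x b.
Proof.
rewrite /expM /expw_tot /mass /weight_tot expw_weightE.
by under eq_bigr do rewrite expw_weightE.
Qed.

Lemma distbar_le_demand (D : V -> V -> R) u v :
  h_length src tgt len h D -> symmetric_demand D -> 0 < D u v ->
  (db u v <= (2 * h)%:E)%E.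
Proof.
move=> D_hlen D_sym Duv; have -> : 2 * h = h + h by ring.
by rewrite EFinD leeD // D_hlen // -D_sym.
Qed.

Lemma sep_exp_demand_ge (A : V -> R) (D : V -> V -> R) (H r : R) (C : E -> R) :
  (forall e, 0 <= cut_len len H C e) -> 0 < r ->
  nonneg_demand D -> A_respecting A D ->
  h_length src tgt len h D -> symmetric_demand D ->
  (4 * powR 2 (2 * a) ^+ 2)^-1 * sep src tgt len H C r D <=
  sep src tgt len H C (r / 2) (exp_demand src tgt len h a A).
Proof.
move=> cut_len_ge0 r_gt0 D_ge0 D_resp D_hlen D_sym.
have db_ge0 := distbar_ge0 src tgt len_ge0.
have db_refl := distbar_refl src tgt len_ge0.
have db_triangle := distbar_triangle src tgt len_ge0.
rewrite /exp_demand sep_symmetrizeE; apply: sep_le_cover => //.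
- by move=> u; apply: sumr_ge0 => b _; rewrite expM_massE; apply: mass_ge0.
- by move=> v; apply: sumr_ge0 => b _; rewrite expM_massE; apply: mass_ge0.
move=> u v Duv sep_uv.
rewrite (eq_bigr _ (fun b _ => expM_massE u b)) (eq_bigr _ (fun b _ => expM_massE v b)).
apply: mass_cover => //.
- exact: distbar_le_demand D_hlen D_sym Duv.
- by apply: (distbar_le_demand D_hlen D_sym); rewrite D_sym.
- by apply: lt_trans sep_uv; rewrite lte_fin ltr_pdivrMr // ltr_pMr ?ltr1n.
- by move=> b; have := dist_split_half cut_len_ge0 sep_uv b.
Qed.

End ExponentialDemand.

Lemma ler_div_scaled (R : numFieldType) (x s1 s2 c : R) :
  0 < c -> 0 < s1 -> 0 <= x -> c * s1 <= s2 -> x / s2 <= c^-1 * (x / s1).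
Proof.
move=> c_gt0 s1_gt0 x_ge0 le_s; apply: le_trans (_ : x / (c * s1) <= _).
  by rewrite ler_wpM2l // lef_pV2 ?posrE ?mulr_gt0 ?(lt_le_trans _ le_s) ?mulr_gt0.
by rewrite invfM mulrCA.
Qed.


Lemma cut_size_ge0 (R : realType) (E : finType) (cap : E -> nat) (H : R) (C : E -> R) :
  is_moving_cut H C -> 0 <= cut_size cap C.
Proof.
move=> C_cut; apply: sumr_ge0 => e _.
by rewrite mulr_ge0 ?ler0n //; case: (C_cut e) => /andP[].
Qed.

Theorem lemma3p10 (R : realType) (V E : finType) (src tgt : E -> V)
  (len cap : E -> nat)
  (len_pos : forall e, (0 < len e)%N) (cap_pos : forall e, (0 < cap e)%N)
  (A : V -> R) (A_ge0 : forall v, 0 <= A v)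
  (alpha h s phi : R)
  (alpha_ge1 : 1 <= alpha) (alpha_le : alpha <= log2 (#|V|%:R : R))
  (h_pos : 0 < h) (s_pos : 0 < s)
  (D : V -> V -> R) (C : E -> R)
  (D_nonneg : nonneg_demand D) (D_resp : A_respecting A D)
  (D_hlen : h_length src tgt len h D) (D_sym : symmetric_demand D)
  (C_cut : is_moving_cut (h * s) C)
  (sep_pos : 0 < sep src tgt len (h * s) C (h * s) D)
  (spars : cut_size cap C / sep src tgt len (h * s) C (h * s) D <= phi) :
  let DA := exp_demand src tgt len h alpha A in
  0 < sep src tgt len (h * s) C (h * s / 2) DA /\
  cut_size cap C / sep src tgt len (h * s) C (h * s / 2) DA
    <= powR 2 (8 * alpha + 1) * phi.
Proof.
move=> DA; set c := (4 * powR 2 (2 * alpha) ^+ 2)^-1.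
have c_gt0 : 0 < c by rewrite invr_gt0 mulr_gt0 ?exprn_gt0 ?powR_gt0.
have hs_gt0 : 0 < h * s by rewrite mulr_gt0.
have cut_len_ge0 e : 0 <= cut_len len (h * s) C e.
  by rewrite addr_ge0 ?ler0n // mulr_ge0 ?(ltW hs_gt0) //; case: (C_cut e) => /andP[].
have sep_DA : c * sep src tgt len (h * s) C (h * s) D <=
              sep src tgt len (h * s) C (h * s / 2) DA.
  exact: sep_exp_demand_ge.
have Cs_ge0 := cut_size_ge0 cap C_cut.
split; first exact: lt_le_trans (mulr_gt0 c_gt0 sep_pos) sep_DA.
apply: (le_trans (ler_div_scaled c_gt0 sep_pos Cs_ge0 sep_DA)).
rewrite /c invrK; apply: ler_pM => //.
- exact: divr_ge0 Cs_ge0 (ltW sep_pos).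
- by apply: four_mul_sq_powR2_le; lra.
Qed.
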